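(* Let $G$ be a finite simple graph. Suppose there exists an injective coloring $f$ of $S_G^2$ using exactly $\chi_i(S_G^2)$ colors such that all extreme vertices of $S_G^2$ receive the same color, and for each extreme vertex $(u,u)$, $u\in V(G)$, the color $f(u,u)$ is not assigned to any neighbor of $(u,u)$ in $S_G^2$. Then $\chi_i(S_G^n)=\chi_i(S_G^2)$ for all $n\ge 2$.
   Context: For a graph $H$, an injective $k$-coloring is a map $f:V(H)\to\{1,\dots,k\}$ such that any two distinct vertices $u,w$ with $f(u)=f(w)$ have no common neighbor; $\chi_i(H)$ is the least such $k$. For a graph $G$ and positive integer $n$, the generalized Sierpiński graph $S_G^n$ has vertex set $V(G)^n$, and $(u_1,\dots,u_n)$, $(v_1,\dots,v_n)$ are adjacent if and only if there is $d\in\{1,\dots,n\}$ with $u_i=v_i$ for $i<d$, $u_dv_d\in E(G)$, and $u_i=v_d$, $v_i=u_d$ for all $i>d$. The extreme vertices of $S_G^n$ are the vertices $(u,u,\dots,u)$ with $u\in V(G)$. *)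

From mathcomp Require Import all_boot.
Set Implicit Arguments. Unset Strict Implicit. Unset Printing Implicit Defensive.

Definition simple_graph (T : finType) (e : rel T) : Prop :=
  symmetric e /\ irreflexive e.

(* Generalized Sierpinski graph S_G^n on V(G)^n (n-tuples), adjacency as in the paper
   (indices 0-based). *)
Definition sierp_adj (T : finType) (e : rel T) (n : nat) : rel (n.-tuple T) :=
  fun u v =>
    [exists d : 'I_n,
      e (tnth u d) (tnth v d) &&
      [forall i : 'I_n,
        ((i < d)%N ==> (tnth u i == tnth v i)) &&
        ((d < i)%N ==> (tnth u i == tnth v d) && (tnth v i == tnth u d))]].

Definition extreme (T : finType) (n : nat) (u : T) : n.-tuple T := nseq_tuple n u.
Arguments extreme {T} n u.

Definition inj_coloring (V : finType) (h : rel V) (C : Type) (f : V -> C) : Prop :=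
  forall u w x : V, u != w -> f u = f w -> ~ (h u x && h w x).

Definition inj_colorableb (V : finType) (h : rel V) (k : nat) : bool :=
  [exists f : {ffun V -> 'I_k},
    [forall u, forall w, forall x,
      ((u != w) && (f u == f w)) ==> ~~ (h u x && h w x)]].

Lemma inj_colorableb_exists (V : finType) (h : rel V) :
  exists k, inj_colorableb h k.
Proof.
exists #|V|; apply/existsP; exists [ffun x => enum_rank x].
apply/forallP => u; apply/forallP => w; apply/forallP => x.
apply/implyP => /andP [Huw]; rewrite !ffunE => /eqP /enum_rank_inj Heq.
by rewrite Heq eqxx in Huw.
Qed.

Definition inj_chrom (V : finType) (h : rel V) : nat :=
  ex_minn (inj_colorableb_exists h).
Arguments sierp_adj {T} e n _ _.

From mathcomp Require Import all_boot.
Set Implicit Arguments. Unset Strict Implicit. Unset Printing Implicit Defensive.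

(* S_G^(n+1) is made of the copies a S_G^n (a in V(G)) of S_G^n, the only edges
   between copies being (a b..b, b a..a) for ab in E(G).  Embedding one copy gives
   chi_i(S_G^n) <= chi_i(S_G^(n+1)).  Conversely, colouring a w with the colour of w
   turns an injective colouring of S_G^n in which all extreme vertices share a colour
   carried by none of their neighbours into one of S_G^(n+1) with the same property:
   two vertices of different copies can only have a common neighbour when one of them
   is adjacent to an extreme vertex of S_G^n and the other one is extreme, and this is
   exactly what the hypothesis on the extreme colour rules out.  Starting from n = 2
   this gives chi_i(S_G^n) <= chi_i(S_G^2). *)


Section InjectiveChromaticNumber.

Variables (V : finType) (h : rel V).

Lemma inj_colorableP k :
  reflect (exists f : V -> 'I_k, inj_coloring h f) (inj_colorableb h k).
Proof.
apply: (iffP existsP) => [[f /forallP col_f] | [f col_f]].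
  exists f => u w x neq_uw eq_fuw; apply/negP.
  by move/forallP/(_ w)/forallP/(_ x): (col_f u); rewrite neq_uw eq_fuw eqxx.
exists [ffun x => f x]; apply/forallP => u; apply/forallP => w; apply/forallP => x.
rewrite !ffunE; apply/implyP => /andP[neq_uw /eqP eq_fuw].
exact/negP/col_f.
Qed.

Lemma inj_chrom_min k (f : V -> 'I_k) : inj_coloring h f -> inj_chrom h <= k.
Proof.
move=> col_f; rewrite /inj_chrom; case: ex_minnP => k0 _ min_k0.
by apply/min_k0/inj_colorableP; exists f.
Qed.

Lemma inj_chrom_coloring : exists f : V -> 'I_(inj_chrom h), inj_coloring h f.
Proof. by apply/inj_colorableP; rewrite /inj_chrom; case: ex_minnP. Qed.

Lemma inj_chrom_card0 : #|V| = 0 -> inj_chrom h = 0.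
Proof.
move=> V0; apply/eqP; rewrite -leqn0.
have /card_gt0P[f _] : 0 < #|{ffun V -> 'I_0}| by rewrite card_ffun V0.
by apply: (inj_chrom_min (f := f)) => u; have := card0_eq V0 u; rewrite !inE.
Qed.

End InjectiveChromaticNumber.

Lemma inj_coloring_comp (V V' : finType) (h : rel V) (h' : rel V') (C : Type)
    (phi : V -> V') (f : V' -> C) :
  injective phi -> {homo phi : x y / h x y >-> h' x y} ->
  inj_coloring h' f -> inj_coloring h (f \o phi).
Proof.
move=> phi_inj phi_homo col_f u w x neq_uw /= eq_fuw /andP[h_ux h_wx].
apply: (col_f (phi u) (phi w) (phi x) _ eq_fuw).
  by apply: contra neq_uw => /eqP/phi_inj->.
by rewrite !phi_homo.
Qed.

Lemma inj_chrom_homo (V V' : finType) (h : rel V) (h' : rel V') (phi : V -> V') :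
  injective phi -> {homo phi : x y / h x y >-> h' x y} ->
  inj_chrom h <= inj_chrom h'.
Proof.
move=> phi_inj phi_homo; have [f col_f] := inj_chrom_coloring h'.
exact: inj_chrom_min (inj_coloring_comp phi_inj phi_homo col_f).
Qed.

Section Sierpinski.

Variables (T : finType) (e : rel T).

Lemma sierp_adjP n (u v : n.-tuple T) :
  reflect (exists d : 'I_n, [/\ e (tnth u d) (tnth v d),
     forall i : 'I_n, i < d -> tnth u i = tnth v i &
     forall i : 'I_n, d < i -> tnth u i = tnth v d /\ tnth v i = tnth u d])
   (sierp_adj e n u v).
Proof.
apply: (iffP existsP) => [[d /andP[e_uv /forallP eq_uv]] | [d [e_uv lt_d gt_d]]].
  exists d; split=> // i lt_id; have /andP[/implyP lt_eq /implyP gt_eq] := eq_uv i.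
    exact/eqP/lt_eq.
  by have /andP[/eqP-> /eqP->] := gt_eq lt_id.
exists d; rewrite e_uv; apply/forallP => i; apply/andP; split; apply/implyP => lt_di.
  by rewrite lt_d.
by have [-> ->] := gt_d _ lt_di; rewrite !eqxx.
Qed.

Lemma extremeS n (a : T) : extreme n.+1 a = [tuple of a :: extreme n a].
Proof. exact: val_inj. Qed.

Lemma extreme_inj n : injective (@extreme T n.+1).
Proof. by move=> a b /(congr1 (@thead _ _)); rewrite !extremeS !theadE. Qed.

Lemma behead_tuple_cons n (a : T) (x : n.-tuple T) :
  behead_tuple [tuple of a :: x] = x.
Proof. exact: val_inj. Qed.

Lemma sierp_adj_cons n (a b : T) (x y : n.-tuple T) :
  sierp_adj e n.+1 [tuple of a :: x] [tuple of b :: y] =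
  (a == b) && sierp_adj e n x y || [&& e a b, x == extreme n b & y == extreme n a].
Proof.
apply/sierp_adjP/idP => [[d [e_d lt_d gt_d]] | ].
  case: (unliftP ord0 d) => [d' | ] def_d; subst d.
    have eq_ab : a = b by have := lt_d ord0 isT; rewrite !tnth0.
    rewrite eq_ab eqxx /=; apply/orP; left; apply/sierp_adjP; exists d'.
    rewrite !tnthS in e_d; split=> // i lti.
      by have := lt_d (lift ord0 i) lti; rewrite !tnthS.
    by have := gt_d (lift ord0 i) lti; rewrite !tnthS.
  rewrite !tnth0 in e_d; apply/orP; right; rewrite e_d /=; apply/andP.
  by split; apply/eqP/eq_from_tnth => i; rewrite tnth_nseq;
    have := gt_d (lift ord0 i) isT; rewrite !tnthS !tnth0 => -[].
case/orP => [/andP[/eqP <- /sierp_adjP[d [e_d lt_d gt_d]]] | /and3P[e_ab /eqP-> /eqP->]].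
  exists (lift ord0 d); rewrite !tnthS; split=> // i;
    case: (unliftP ord0 i) => [i' | ] -> //; rewrite !tnthS; [exact: lt_d | exact: gt_d].
exists ord0; rewrite !tnth0; split=> // i; case: (unliftP ord0 i) => [i' | ] -> //.
by rewrite !tnthS !tnth_nseq.
Qed.

Lemma inj_chrom_sierp_leS n :
  inj_chrom (sierp_adj e n.+1) <= inj_chrom (sierp_adj e n.+2).
Proof.
have [a _ | T0] := pickP T.
  apply: (@inj_chrom_homo _ _ _ _ (fun x : n.+1.-tuple T => [tuple of a :: x])).
    by move=> x y /(congr1 (@behead_tuple _ _)); rewrite !behead_tuple_cons.
  by move=> x y adj_xy; rewrite sierp_adj_cons eqxx adj_xy.
by rewrite inj_chrom_card0 // card_tuple (eq_card0 T0) exp0n.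
Qed.

Lemma inj_chrom_sierp_homo :
  {homo (fun n => inj_chrom (sierp_adj e n.+1)) : m n / m <= n}.
Proof.
by apply: homo_leq => [//|m n p|n]; [exact: leq_trans | exact: inj_chrom_sierp_leS].
Qed.

Definition extreme_coloring n k (f : n.-tuple T -> 'I_k) : Prop :=
  [/\ inj_coloring (sierp_adj e n) f,
      forall u v, f (extreme n u) = f (extreme n v) &
      forall u w, sierp_adj e n (extreme n u) w -> f w <> f (extreme n u)].

Hypotheses (e_sym : symmetric e) (e_irr : irreflexive e).

Lemma sierp_adj_sym n : symmetric (sierp_adj e n).
Proof.
suff adj_sym u v : sierp_adj e n u v -> sierp_adj e n v u.
  by move=> u v; apply/idP/idP; apply: adj_sym.
case/sierp_adjP=> d [e_d lt_d gt_d]; apply/sierp_adjP; exists d; split.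
- by rewrite e_sym.
- by move=> i /lt_d ->.
- by move=> i /gt_d[-> ->].
Qed.

Lemma extreme_coloring_behead n k (g : n.+1.-tuple T -> 'I_k) :
  extreme_coloring g -> extreme_coloring (fun t : n.+2.-tuple T => g (behead_tuple t)).
Proof.
move=> [col_g ext_g nbr_g].
have ext_nbr x y b c : sierp_adj e n.+1 x (extreme _ b) -> y = extreme _ c -> g x <> g y.
  by rewrite sierp_adj_sym => /nbr_g nbr_x ->; rewrite (ext_g c b).
split.
- move=> u w z; case/tupleP: u => a x; case/tupleP: w => b y; case/tupleP: z => c t.
  rewrite !behead_tuple_cons !sierp_adj_cons /= => neq_uw eq_g /andP[].
  case/orP => [/andP[/eqP<- adj_xt] | /and3P[_ /eqP x_ext /eqP t_ext]].
    case/orP => [/andP[/eqP eq_ba adj_yt] | /and3P[_ /eqP y_ext /eqP t_ext]].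
      subst b; apply: (col_g x y t _ eq_g); last by rewrite adj_xt.
      by apply: contraNneq neq_uw => ->.
    by move: adj_xt; rewrite t_ext => /ext_nbr/(_ y_ext).
  case/orP => [/andP[_ adj_yt] | /and3P[_ /eqP y_ext /eqP t_ext']].
    by move: adj_yt; rewrite t_ext => /ext_nbr/(_ x_ext); rewrite eq_g.
  rewrite t_ext in t_ext'; move/negP: neq_uw; apply.
  by rewrite x_ext y_ext (extreme_inj t_ext').
- by move=> a b; rewrite !(extremeS n.+1) !behead_tuple_cons (ext_g a b).
- move=> a w; case/tupleP: w => c t.
  rewrite extremeS sierp_adj_cons !behead_tuple_cons.
  case/orP => [/andP[_ /nbr_g //] | /and3P[e_ac /eqP/extreme_inj eq_ac _]].
  by rewrite -eq_ac e_irr in e_ac.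
Qed.

Lemma extreme_coloring_lift n k (f : 2.-tuple T -> 'I_k) :
  extreme_coloring f -> exists g : n.+2.-tuple T -> 'I_k, extreme_coloring g.
Proof.
move=> col_f; elim: n => [|n [g col_g]]; first by exists f.
by exists (fun t : n.+3.-tuple T => g (behead_tuple t)); apply: extreme_coloring_behead.
Qed.

End Sierpinski.

Theorem mainTheorem2 (T : finType) (e : rel T) :
  simple_graph e ->
  (exists f : 2.-tuple T -> 'I_(inj_chrom (sierp_adj e 2)),
      inj_coloring (sierp_adj e 2) f /\
      (forall u v : T, f (extreme 2 u) = f (extreme 2 v)) /\
      (forall (u : T) (w : 2.-tuple T),
          sierp_adj e 2 (extreme 2 u) w -> f w <> f (extreme 2 u))) ->
  forall n : nat, (2 <= n)%N ->
    inj_chrom (sierp_adj e n) = inj_chrom (sierp_adj e 2).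
Proof.
move=> [e_sym e_irr] [f [col_f [ext_f nbr_f]]] [|[|n]] // _.
have col2_f : extreme_coloring e f by split.
have [g [col_g _ _]] := extreme_coloring_lift e_sym e_irr n col2_f.
apply/eqP; rewrite eqn_leq (inj_chrom_min col_g).
by rewrite (inj_chrom_sierp_homo e (isT : 1 <= n.+1)).
Qed.
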